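(* Let $a,b,c\ge 0$ and let $I=I_{L(a,b,c)}\subseteq Q$ be the edge ideal of the graph $L(a,b,c)$. For every total order $<$ on $G(I)$ in which $xy$ is the least element, the Lyubeznik resolution $\mathbb{L}_<$ is the minimal $Q$-free resolution of $Q/I$.
   Context: $L(a,b,c)$ is the graph with vertex set $\{x,y\}\cup\{x_i\}_{i=1}^a\cup\{y_j\}_{j=1}^b\cup\{z_k\}_{k=1}^c$ and edges $\{x,y\}$, $\{x,x_i\}$ ($1\le i\le a$), $\{y,y_j\}$ ($1\le j\le b$), $\{x,z_k\},\{y,z_k\}$ ($1\le k\le c$). $Q$ is the polynomial ring over a field $\Bbbk$ in these vertices as variables, and the edge ideal is generated by the products of the endpoints of the edges. For a monomial ideal $I$ with minimal generating set $G(I)$, $m_U=\mathrm{lcm}(U)$ for $U\subseteq G(I)$, the Taylor resolution $\mathbb{T}$ has basis $e_U$ ($U\subseteq G(I)$, $|U|=i$ in degree $i$) and differential $\partial(e_U)=\sum_{u\in U}(-1)^{|\{v\in U:v<u\}|}\frac{m_U}{m_{U\setminus\{u\}}}e_{U\setminus\{u\}}$. For a total order $<$ on $G(I)$, the Lyubeznik resolution $\mathbb{L}_<$ is the subcomplex of $\mathbb{T}$ spanned by those $e_U$, $U=\{u_{i_1}<\cdots<u_{i_s}\}$, such that for every $t<s$ and every generator $u_q<u_{i_t}$, $u_q$ does not divide $\mathrm{lcm}(u_{i_t},u_{i_{t+1}},\ldots,u_{i_s})$; it is a free resolution of $Q/I$. *)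

From HB Require Import structures.
From mathcomp Require Import all_boot all_order all_algebra.
From mathcomp Require Import finmap.
From mathcomp Require Import mpoly.

Set Implicit Arguments.
Unset Strict Implicit.
Unset Printing Implicit Defensive.

Import GRing.Theory.
Local Open Scope fset_scope.
Local Open Scope ring_scope.

Section LGraph.
Variables (a b c : nat).

Definition nv : nat := (a + b + c).+2.

(* Vertex indexing (0-based): x = 0, y = 1, x_i = 2+i, y_j = 2+a+j,
   z_k = 2+a+b+k. *)
Definition vx : 'I_nv := @inord (a + b + c).+1 0.
Definition vy : 'I_nv := @inord (a + b + c).+1 1.
Definition vxi (i : 'I_a) : 'I_nv := @inord (a + b + c).+1 (2 + i).
Definition vyj (j : 'I_b) : 'I_nv := @inord (a + b + c).+1 (2 + a + j).
Definition vzk (k : 'I_c) : 'I_nv := @inord (a + b + c).+1 (2 + a + b + k).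

Definition Ledges : seq ('I_nv * 'I_nv) :=
  (vx, vy) :: [seq (vx, vxi i) | i <- enum 'I_a]
           ++ [seq (vy, vyj j) | j <- enum 'I_b]
           ++ [seq (vx, vzk k) | k <- enum 'I_c]
           ++ [seq (vy, vzk k) | k <- enum 'I_c].

Definition edge_mon (e : 'I_nv * 'I_nv) : 'X_{1..nv} :=
  (mnm1 e.1 + mnm1 e.2)%MM.

(* G(I): the minimal generating set of the edge ideal I_{L(a,b,c)},
   i.e. the edge monomials (given by their exponent vectors). *)
Definition GI : {fset 'X_{1..nv}} := [fset edge_mon e | e in Ledges].

Definition mxy : 'X_{1..nv} := edge_mon (vx, vy).

Definition mlcmU (U : {fset 'X_{1..nv}}) : 'X_{1..nv} :=
  \big[@mlcm nv/0%MM]_(v <- U) v.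

Definition total_order_on (S : {fset 'X_{1..nv}}) (lt : rel 'X_{1..nv}) : Prop :=
  [/\ {in S, forall u, ~~ lt u u},
      {in S &, forall u v, u != v -> lt u v || lt v u} &
      {in S & S & S, forall u v w, lt u v -> lt v w -> lt u w}].

(* Lyubeznik sets: U = {u_{i_1} < ... < u_{i_s}} subset of G(I) such that
   for every t < s (i.e. u = u_{i_t} is not the largest element of U) and
   every generator q < u_{i_t}, q does not divide
   lcm(u_{i_t}, u_{i_{t+1}}, ..., u_{i_s}). *)
Definition lyubeznik (lt : rel 'X_{1..nv}) (U : {fset 'X_{1..nv}}) : bool :=
  (U `<=` GI) &&
  all (fun u => has (lt u) U ==>
         all (fun q => lt q u ==>
                ~~ (q <= mlcmU [fset v in U | (v == u) || lt u v])%MM) GI) U.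

Variable k : fieldType.

(* Coefficient of e_V in the Taylor differential of e_U:
   sum over u in U with V = U \ {u} of
   (-1)^{|{v in U : v < u}|} (m_U / m_{U \ u}). *)
Definition taylor_coef (lt : rel 'X_{1..nv}) (U V : {fset 'X_{1..nv}})
    : {mpoly k[nv]} :=
  \sum_(u <- U | V == U `\ u)
     ((-1) ^+ #|` [fset v in U | lt v u]|) *:
       'X_[(mlcmU U - mlcmU (U `\ u))%MM].

Definition in_max_ideal (p : {mpoly k[nv]}) : Prop :=
  exists q : 'I_nv -> {mpoly k[nv]}, p = \sum_(i < nv) 'X_i * q i.

(* The Lyubeznik resolution L_< (a free resolution of Q/I, with basis the
   e_U for Lyubeznik sets U and differential the restriction of the Taylor
   differential) is minimal: its differential maps L_< into m L_<, i.e.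
   every matrix entry of the differential lies in m. *)
Definition lyubeznik_minimal (lt : rel 'X_{1..nv}) : Prop :=
  forall U V : {fset 'X_{1..nv}}, lyubeznik lt U -> lyubeznik lt V ->
    in_max_ideal (taylor_coef lt U V).

End LGraph.

From mathcomp Require Import all_boot all_order all_algebra.
From mathcomp Require Import finmap.
From mathcomp Require Import mpoly.
From mathcomp Require Import zify.

(* The Taylor differential has an entry outside the maximal ideal only when
   some u in U divides m_{U \ u}; we show this never happens for a Lyubeznik
   set U.  Every edge other than xy joins x or y (the hubs) to a vertex w
   outside {x, y}, and every other edge through w joins w to the other hub.
   Hence if u divides m_{U \ u}, then U contains generators t, s different
   from xy with x | t and y | s.  No generator other than xy is divisible by
   both, so t <> s and xy | lcm(t, s); as xy is the least generator, this
   violates the Lyubeznik condition at the smaller of t and s. *)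

Set Implicit Arguments.
Unset Strict Implicit.
Unset Printing Implicit Defensive.

Import GRing.Theory.
Local Open Scope fset_scope.
Local Open Scope ring_scope.

Section BigMlcm.
Variable n : nat.
Implicit Types (m u : 'X_{1..n}) (s : seq 'X_{1..n}).

Lemma lem_big_mlcm s u : u \in s -> (u <= \big[@mlcm n/0%MM]_(v <- s) v)%MM.
Proof.
elim: s => // v s IHs; rewrite inE big_cons => /orP[/eqP->|/IHs u_le].
- exact: lem_mlcml.
- exact: lepm_trans u_le (lem_mlcmr _ _).
Qed.

Lemma big_mlcm_gt0 s j : (0 < (\big[@mlcm n/0%MM]_(v <- s) v) j)%N ->
  exists2 v, v \in s & (0 < v j)%N.
Proof.
elim: s => [|v s IHs]; first by rewrite big_nil mnm0E.
rewrite big_cons mnmE; have [vj0|vj_gt0] := posnP (v j); last first.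
  by exists v; rewrite ?mem_head.
by rewrite vj0 max0n => /IHs[w ws wj_gt0]; exists w; rewrite ?inE ?ws ?orbT.
Qed.

Lemma subm_neq0 m1 m2 u : (u <= m1)%MM -> ~~ (u <= m2)%MM -> (m1 - m2 != 0)%MM.
Proof.
move=> u_le1; apply: contraNN => /eqP m12_0; apply: lepm_trans u_le1 _.
by apply/mnm_lepP => j; rewrite -subn_eq0 -mnmBE m12_0 mnm0E.
Qed.

End BigMlcm.

Section MaximalIdeal.
Variables (k : fieldType) (a b c : nat).
Local Notation N := (nv a b c).
Local Notation in_max_ideal := (@in_max_ideal a b c k).

Lemma in_max_ideal_sum (I : Type) (r : seq I) (P : pred I) (F : I -> {mpoly k[N]}) :
  (forall i, P i -> in_max_ideal (F i)) -> in_max_ideal (\sum_(i <- r | P i) F i).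
Proof.
move=> FP; apply: big_ind => //.
- by exists (fun=> 0); rewrite big1 // => i _; rewrite mulr0.
- move=> _ _ [p ->] [q ->]; exists (fun i => p i + q i).
  by rewrite -big_split; apply: eq_bigr => i _; rewrite mulrDr.
Qed.

Lemma in_max_idealZ (x : k) (p : {mpoly k[N]}) : in_max_ideal p -> in_max_ideal (x *: p).
Proof.
move=> [q ->]; exists (fun i => x *: q i).
by rewrite scaler_sumr; apply: eq_bigr => i _; rewrite scalerAr.
Qed.

Lemma in_max_ideal_mpolyX (d : 'X_{1..N}) : (d != 0)%MM -> in_max_ideal 'X_[d].
Proof.
have [i di_gt0 _|d0] := pickP (fun i => 0 < d i)%N; last first.
  move/eqP => d_neq0; exfalso; apply: d_neq0; apply/mnmP => i.
  by rewrite mnm0E; apply/eqP; rewrite eqn0Ngt d0.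
exists (fun j => if j == i then 'X_[d - U_(i)] else 0).
rewrite (bigD1 i) //= eqxx big1 => [|j /negbTE ->]; last by rewrite mulr0.
by rewrite addr0 -mpolyXD addmC submK // lep1mP -lt0n.
Qed.

End MaximalIdeal.

Section LGraph.
Variables a b c : nat.
Local Notation N := (nv a b c).
Local Notation vx := (vx a b c).
Local Notation vy := (vy a b c).
Local Notation GI := (GI a b c).
Local Notation mxy := (mxy a b c).
Local Notation edge_mon := (@edge_mon a b c).
Local Notation mlcmU := (@mlcmU a b c).

Lemma mem_hubs (w : 'I_N) : (w \in [:: vx; vy]) = (val w < 2)%N.
Proof. by rewrite !inE -!val_eqE /= !inordK //; case: w => [[|[|m]] ?]. Qed.

Lemma hubs_neq : vx != vy.
Proof. by rewrite -val_eqE /= !inordK. Qed.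

Lemma Ledges_shape e : e \in Ledges a b c ->
  e = (vx, vy) \/ e.1 \in [:: vx; vy] /\ e.2 \notin [:: vx; vy].
Proof.
rewrite in_cons => /orP[/eqP->|]; first by left.
rewrite !mem_cat => /or4P[] /mapP[i _ ->]; right;
  (split; first by rewrite !inE eqxx ?orbT);
  rewrite mem_hubs /= inordK; have := ltn_ord i; lia.
Qed.

Lemma edge_monE e j : edge_mon e j = ((e.1 == j) + (e.2 == j))%N.
Proof. by rewrite /edge_mon mnmDE !mnm1E. Qed.

Lemma edge_mon_fst e : (0 < edge_mon e e.1)%N.
Proof. by rewrite edge_monE eqxx. Qed.

Lemma edge_mon_snd e : (0 < edge_mon e e.2)%N.
Proof. by rewrite edge_monE eqxx addn1. Qed.

Lemma mxy_in_GI : mxy \in GI.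
Proof. by apply/imfsetP; exists (vx, vy); rewrite ?mem_head. Qed.

Lemma mxy_lep (m : 'X_{1..N}) : (0 < m vx)%N -> (0 < m vy)%N -> (mxy <= m)%MM.
Proof.
move=> mx_gt0 my_gt0; apply/mnm_lepP => j; rewrite edge_monE /=.
have [<-|_] := eqVneq vx j; first by rewrite eq_sym (negbTE hubs_neq).
by have [<-|_] := eqVneq vy j.
Qed.

Lemma mxy_leaf w : w \notin [:: vx; vy] -> mxy w = 0%N.
Proof. by rewrite !inE negb_or edge_monE /= !(eq_sym _ w) => /andP[/negbTE-> /negbTE->]. Qed.

Lemma GI_shape v : v \in GI -> v != mxy ->
  exists p w, [/\ p \in [:: vx; vy], w \notin [:: vx; vy] & v = edge_mon (p, w)].
Proof.
case/imfsetP => -[p w] /Ledges_shape[-> ->|[p_hub w_leaf] ->]; first by rewrite eqxx.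
by exists p, w.
Qed.

Lemma GI_xy v : v \in GI -> (0 < v vx)%N -> (0 < v vy)%N -> v = mxy.
Proof.
move=> vG; have [//|/(GI_shape vG)[p [w [_ w_leaf ->]]]] := eqVneq v mxy.
move: w_leaf; rewrite !inE negb_or !edge_monE /= => /andP[/negbTE-> /negbTE->].
by rewrite !addn0 !lt0b => /eqP-> /eqP vx_vy; move: hubs_neq; rewrite vx_vy eqxx.
Qed.

Lemma GI_through v w : v \in GI -> w \notin [:: vx; vy] -> (0 < v w)%N ->
  exists2 q, q \in [:: vx; vy] & v = edge_mon (q, w).
Proof.
move=> vG w_leaf vw_gt0.
have v_neq : v != mxy by apply: contraTneq vw_gt0 => ->; rewrite mxy_leaf.
have [p [w' [p_hub _ v_eq]]] := GI_shape vG v_neq.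
exists p => //; move: vw_gt0; rewrite v_eq edge_monE /=.
have -> : (p == w) = false by apply: contraNF w_leaf => /eqP <-.
by rewrite add0n lt0b => /eqP->.
Qed.

Section Lyubeznik.
Variable lt : rel 'X_{1..N}.

Lemma lyubeznik_sub U : lyubeznik lt U -> {subset U <= GI}.
Proof. by case/andP => /fsubsetP. Qed.

Lemma lyubeznik_ndvd_tail U t q : lyubeznik lt U -> t \in U -> has (lt t) U ->
  q \in GI -> lt q t -> ~~ (q <= mlcmU [fset v in U | (v == t) || lt t v])%MM.
Proof.
case/andP => _ /allP LU tU t_not_max qG qt.
by move: (LU t tU); rewrite t_not_max => /allP/(_ q qG); rewrite qt.
Qed.

Hypothesis lt_total : {in GI &, forall u v, u != v -> lt u v || lt v u}.
Hypothesis mxy_least : forall u, u \in GI -> u != mxy -> lt mxy u.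

Lemma lyubeznik_mxy_ndvd_mlcm U t s : lyubeznik lt U -> t \in U -> s \in U ->
  t != s -> t != mxy -> s != mxy -> ~~ (mxy <= mlcm t s)%MM.
Proof.
move=> LU; wlog ts : t s / lt t s => [hyp tU sU ts_neq t_neq s_neq|tU sU _ t_neq _].
  case/orP: (lt_total (lyubeznik_sub LU tU) (lyubeznik_sub LU sU) ts_neq) => [|st].
    by move/hyp; apply.
  by rewrite mlcmC; apply: hyp; rewrite // eq_sym.
have t_not_max : has (lt t) U by apply/hasP; exists s.
apply: contraNN (lyubeznik_ndvd_tail LU tU t_not_max mxy_in_GI
  (mxy_least (lyubeznik_sub LU tU) t_neq)) => mxy_le.
apply: lepm_trans mxy_le _; rewrite lem_mlcm.
by apply/andP; split; apply: lem_big_mlcm; rewrite !inE ?tU ?sU ?eqxx ?ts ?orbT.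
Qed.

Lemma lyubeznik_no_x_y_split U t s : lyubeznik lt U -> t \in U -> s \in U ->
  t != mxy -> s != mxy -> (0 < t vx)%N -> (0 < s vy)%N -> False.
Proof.
move=> LU tU sU t_neq s_neq tx_gt0 sy_gt0.
have [ts|ts_neq] := eqVneq t s.
  by move: t_neq; rewrite (GI_xy (lyubeznik_sub LU tU)) ?eqxx // ts.
apply: (negP (lyubeznik_mxy_ndvd_mlcm LU tU sU ts_neq t_neq s_neq)); apply: mxy_lep.
- exact: leq_trans tx_gt0 (mnm_lepP (lem_mlcml t s) vx).
- exact: leq_trans sy_gt0 (mnm_lepP (lem_mlcmr t s) vy).
Qed.

Lemma lyubeznik_ndvd_lcm_rest U u : lyubeznik lt U -> u \in U ->
  ~~ (u <= mlcmU (U `\ u))%MM.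
Proof.
move=> LU uU; apply/negP => /mnm_lepP u_dvd.
have other j : (0 < u j)%N -> exists2 v, v \in U & v != u /\ (0 < v j)%N.
  move=> /leq_trans/(_ (u_dvd j))/big_mlcm_gt0[v].
  by rewrite in_fsetD1 => /andP[v_neq vU] vj_gt0; exists v.
have [u_xy|u_neq] := eqVneq u mxy.
  rewrite u_xy in other.
  have [t tU [t_neq tx_gt0]] := other vx (edge_mon_fst (vx, vy)).
  have [s sU [s_neq sy_gt0]] := other vy (edge_mon_snd (vx, vy)).
  exact: (lyubeznik_no_x_y_split LU tU sU t_neq s_neq tx_gt0 sy_gt0).
have [p [w [p_hub w_leaf u_eq]]] := GI_shape (lyubeznik_sub LU uU) u_neq.
have /other[v vU [v_neq_u vw_gt0]] : (0 < u w)%N by rewrite u_eq edge_mon_snd.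
have [q q_hub v_eq] := GI_through (lyubeznik_sub LU vU) w_leaf vw_gt0.
have v_neq : v != mxy by apply: contraTneq vw_gt0 => ->; rewrite mxy_leaf.
have pq_neq : p != q by apply: contraNneq v_neq_u => pq; rewrite u_eq v_eq pq.
have [[p_x q_y]|[p_y q_x]] : p = vx /\ q = vy \/ p = vy /\ q = vx.
  move: p_hub q_hub pq_neq; rewrite !inE.
  by case/orP=> /eqP-> /orP[]/eqP->; rewrite ?eqxx //; [left | right].
- apply: (lyubeznik_no_x_y_split LU uU vU u_neq v_neq);
    by rewrite ?u_eq ?v_eq ?p_x ?q_y; apply: edge_mon_fst.
- apply: (lyubeznik_no_x_y_split LU vU uU v_neq u_neq);
    by rewrite ?u_eq ?v_eq ?p_y ?q_x; apply: edge_mon_fst.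
Qed.

End Lyubeznik.
End LGraph.

Theorem mainTheorem2 (k : fieldType) (a b c : nat)
    (lt : rel 'X_{1..nv a b c}) :
  total_order_on (GI a b c) lt ->
  (forall u, u \in GI a b c -> u != mxy a b c -> lt (mxy a b c) u) ->
  lyubeznik_minimal k lt.
Proof.
move=> [_ lt_total _] mxy_least U V LU _.
rewrite /taylor_coef big_seq_cond; apply: in_max_ideal_sum => u /andP[uU _].
apply/in_max_idealZ/in_max_ideal_mpolyX/(subm_neq0 (u := u)).
- exact: lem_big_mlcm.
- exact: (lyubeznik_ndvd_lcm_rest lt_total mxy_least LU uU).
Qed.
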